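(* In the setting described in the context, suppose the weighted design matrix $A_w\in\mathbb{R}^{T\times k}$ has full column rank. Then the least-squares estimator $\hat{\mathbf f}=(A_w^{\top}A_w)^{-1}A_w^{\top}\tilde{\mathbf s}$ satisfies $\mathbb{E}[\hat{\mathbf f}]=\mathbf f$, where the expectation is over the randomness of the users' reports, taken conditionally on the block counts $(n_0,\dots,n_{\ell-1})$ (all assumed $\ge 1$).
   Context: Domain $[k]=\{0,\dots,k-1\}$, privacy parameter $\varepsilon>0$, pairwise-coprime integer moduli $m_0,\dots,m_{\ell-1}\ge 2$. For each $j$, $\omega_j$ is the nearest integer to $m_j/(e^{\varepsilon}+1)$, $p_j=\frac{\omega_j e^{\varepsilon}}{\omega_j e^{\varepsilon}+m_j-\omega_j}$, and $q_j=\frac{\omega_j e^{\varepsilon}(\omega_j-1)+(m_j-\omega_j)\omega_j}{(m_j-1)(\omega_j e^{\varepsilon}+m_j-\omega_j)}$. There are $n$ users with values $x_1,\dots,x_n\in[k]$, and $\mathbf f\in\mathbb{R}^k$ with $f_v=\#\{i:x_i=v\}/n$. Each user independently runs the following mechanism on its value $x$: draw $J$ uniform on $\{0,\dots,\ell-1\}$; set $r=x\bmod m_J$; with probability $p_J$ report $Z=\{r\}\cup S$ with $S$ a uniformly random $(\omega_J-1)$-subset of $\{0,\dots,m_J-1\}\setminus\{r\}$, otherwise report $Z$ a uniformly random $\omega_J$-subset of $\{0,\dots,m_J-1\}\setminus\{r\}$; the report is $(J,Z)$. Server: $n_j$ is the number of reports with $J=j$; $c_j\in\mathbb{R}^{m_j}$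 with $c_j[a]$ the number of reports with $J=j$ and $a\in Z$; $\bar y_j=c_j/n_j$; $\hat s_j=(\bar y_j-q_j\mathbf 1)/(p_j-q_j)$; $\mathbf s\in\mathbb{R}^T$ stacks $\hat s_0,\dots,\hat s_{\ell-1}$, with $T=\sum_j m_j$. Let $\pi_j=q_j+(p_j-q_j)/m_j$ and $w_j=\frac{(p_j-q_j)^2 n_j}{\pi_j(1-\pi_j)}$; let $W^{1/2}$ be the $T\times T$ diagonal matrix whose entries are $\sqrt{w_0}$ repeated $m_0$ times, ..., $\sqrt{w_{\ell-1}}$ repeated $m_{\ell-1}$ times. For each $j$, $A_j\in\{0,1\}^{m_j\times k}$ has $A_j[r,x]=1$ iff $x\bmod m_j=r$; $A\in\{0,1\}^{T\times k}$ stacks $A_0,\dots,A_{\ell-1}$ vertically; $A_w=W^{1/2}A$ and $\tilde{\mathbf s}=W^{1/2}\mathbf s$. *)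

From HB Require Import structures.
From mathcomp Require Import all_boot all_order all_algebra.
From mathcomp Require Import all_classical all_reals all_analysis.
Set Implicit Arguments.
Unset Strict Implicit.
Unset Printing Implicit Defensive.
Import Order.TTheory GRing.Theory Num.Theory.
Local Open Scope ring_scope.

(* omega_j = nearest integer to m/(e^eps+1), convention: floor(x + 1/2). *)
Definition omega_of (R : realType) (eps : R) (m : nat) : nat :=
  `|Num.floor (m%:R / (expR eps + 1) + 2^-1)|%N.

Definition p_of (R : realType) (eps : R) (m : nat) : R :=
  let w : R := (omega_of eps m)%:R in
  w * expR eps / (w * expR eps + m%:R - w).

Definition q_of (R : realType) (eps : R) (m : nat) : R :=
  let w : R := (omega_of eps m)%:R in
  (w * expR eps * (w - 1) + (m%:R - w) * w) /
  ((m%:R - 1) * (w * expR eps + m%:R - w)).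

Definition memr (m : nat) (Z : {set 'I_m}) (r : nat) : bool :=
  [exists a in Z, nat_of_ord a == r].

(* probability mass that the randomizer, with modulus m and true residue r,
   outputs the set Z: with prob. p, {r} ∪ uniform (omega-1)-subset of [m]\{r};
   otherwise a uniform omega-subset of [m]\{r}. *)
Definition mech (R : realType) (eps : R) (m r : nat) (Z : {set 'I_m}) : R :=
  let w := omega_of eps m in
  let p := p_of eps m in
  if #|Z| == w then
    (if memr Z r then p / ('C(m.-1, w.-1))%:R
     else (1 - p) / ('C(m.-1, w))%:R)
  else 0.

Notation report m := {j : 'I_ _ & {set 'I_(m j)}}.

Definition prob (R : realType) (eps : R) (l n : nat) (m : 'I_l -> nat)
  (x : 'I_n -> nat) (o : {ffun 'I_n -> report m}) : R :=
  \prod_(i < n)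
     ((l%:R)^-1 * mech eps (x i %% m (tag (o i))) (tagged (o i))).

Definition cnt (l n : nat) (m : 'I_l -> nat) (o : {ffun 'I_n -> report m})
  (j : 'I_l) : nat := #|[set i | tag (o i) == j]|.

Definition cnt_a (l n : nat) (m : 'I_l -> nat) (o : {ffun 'I_n -> report m})
  (j : 'I_l) (a : nat) : nat :=
  #|[set i | (tag (o i) == j) && memr (tagged (o i)) a]|.

Definition Ablock (R : realType) (mj k : nat) : 'M[R]_(mj, k) :=
  \matrix_(r < mj, v < k) ((v %% mj)%N == r :> nat)%:R.

Definition Amat (R : realType) (l k : nat) (m : 'I_l -> nat)
  : 'M[R]_(\sum_(j < l) m j, k) := \mxcol_(j < l) Ablock R (m j) k.

Definition pi_of (R : realType) (eps : R) (m : nat) : R :=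
  q_of eps m + (p_of eps m - q_of eps m) / m%:R.

Definition weight (R : realType) (eps : R) (m nj : nat) : R :=
  (p_of eps m - q_of eps m) ^+ 2 * nj%:R / (pi_of eps m * (1 - pi_of eps m)).

Definition Wsqrt (R : realType) (eps : R) (l : nat) (m : 'I_l -> nat)
  (nn : 'I_l -> nat) : 'M[R]_(\sum_(j < l) m j) :=
  \mxdiag_(j < l) ((Num.sqrt (weight eps (m j) (nn j)))%:M : 'M[R]_(m j)).

Definition Aw (R : realType) (eps : R) (l k : nat) (m : 'I_l -> nat)
  (nn : 'I_l -> nat) : 'M[R]_(\sum_(j < l) m j, k) :=
  Wsqrt eps m nn *m Amat R k m.

Definition shat (R : realType) (eps : R) (l n : nat) (m : 'I_l -> nat)
  (o : {ffun 'I_n -> report m}) (j : 'I_l) : 'cV[R]_(m j) :=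
  \col_(a < m j)
    (((cnt_a o j a)%:R / (cnt o j)%:R - q_of eps (m j)) /
     (p_of eps (m j) - q_of eps (m j))).

Definition svec (R : realType) (eps : R) (l n : nat) (m : 'I_l -> nat)
  (o : {ffun 'I_n -> report m}) : 'cV[R]_(\sum_(j < l) m j) :=
  \mxcol_(j < l) shat eps o j.

Definition fhat (R : realType) (eps : R) (l n k : nat) (m : 'I_l -> nat)
  (o : {ffun 'I_n -> report m}) : 'cV[R]_k :=
  let A := Aw eps k m (cnt o) in
  invmx (A^T *m A) *m A^T *m (Wsqrt eps m (cnt o) *m svec eps o).

Definition fvec (R : realType) (n k : nat) (x : 'I_n -> 'I_k) : 'cV[R]_k :=
  \col_(v < k) (#|[set i | x i == v]|%:R / n%:R).

Definition counts_eq (l n : nat) (m : 'I_l -> nat) (nn : 'I_l -> nat)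
  (o : {ffun 'I_n -> report m}) : bool := [forall j, cnt o j == nn j].

(* E[ fhat | (n_0,...,n_{l-1}) = nn ] *)
Definition cond_exp_fhat (R : realType) (eps : R) (l n k : nat)
  (m : 'I_l -> nat) (x : 'I_n -> 'I_k) (nn : 'I_l -> nat) : 'cV[R]_k :=
  (\sum_(o : {ffun 'I_n -> report m} | counts_eq nn o)
      prob eps (fun i => nat_of_ord (x i)) o)^-1 *:
  (\sum_(o : {ffun 'I_n -> report m} | counts_eq nn o)
      prob eps (fun i => nat_of_ord (x i)) o *: @fhat R eps l n k m o).

(* Conditionally on the block
   counts, the probability of an outcome still factorises over the users once
   their block labels t : 'I_n -> 'I_l are fixed, and all labellings with the
   prescribed counts are equally likely; by symmetry between users, user i lies
   in block j in a fraction n_j / n of them.  A user in block j reports a fixed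
   residue a with probability q + (p - q) [x mod m_j = a], so
   E[c_j[a]] = n_j (q + (p - q) (A_j f)_a), that is E[s_j] = A_j f.  Hence
   E[W^{1/2} s] = A_w f, and (A_w^T A_w)^{-1} A_w^T, well defined because A_w
   has full column rank, maps A_w f back to f. *)

From HB Require Import structures.
From mathcomp Require Import all_boot all_order all_algebra perm.
Set Implicit Arguments.
Unset Strict Implicit.
Unset Printing Implicit Defensive.
Import Order.TTheory GRing.Theory Num.Theory.

Section SizedSubsets.
Variable T : finType.

Lemma card_sized_sets_between (F G : {set T}) (w : nat) : [disjoint F & G] ->
  #|[set Z : {set T} | (F \subset Z) && [disjoint Z & G] && (#|Z| == w)]| =
  if #|F| <= w then 'C(#|~: (F :|: G)|, w - #|F|) else 0.
Proof.
move=> dFG; case: leqP => [Fw|wF]; last first.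
  apply: eq_card0 => Z; rewrite inE; apply/negP => /andP[/andP[/subset_leq_card]].
  by move=> + _ /eqP ZW; rewrite ZW leqNgt wF.
rewrite -cards_draws.
set D := [set A : {set T} | A \subset ~: (F :|: G) & #|A| == w - #|F|].
have DF A : A \in D -> [disjoint A & F].
  rewrite inE setCU => /andP[/subsetP sA _]; apply/pred0P => u /=.
  by apply/negP => /andP[/sA]; rewrite !inE => /andP[/negPf->].
have injD : {in D &, injective (fun A => A :|: F)}.
  move=> A B /DF dAF /DF dBF /(congr1 (fun C => C :\: F)).
  by rewrite !setDUl setDv !setU0 (setDidPl dAF) (setDidPl dBF).
rewrite -(card_in_imset injD); apply: eq_card => Z; rewrite inE.
apply/idP/imsetP => [/andP[/andP[sFZ dZG] /eqP cZ] | [A AD ->]].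
  exists (Z :\: F); last by rewrite setUC -{1}(setIidPr sFZ) setID.
  rewrite inE cardsD (setIidPr sFZ) cZ eqxx andbT setCU.
  apply/subsetP => u; rewrite !inE => /andP[-> uZ] /=.
  by rewrite (disjointFr dZG uZ).
have dAF := DF A AD; move: AD; rewrite inE => /andP[sA /eqP cA].
rewrite subsetUr cardsU (disjoint_setI0 dAF) cards0 subn0 cA subnK // eqxx andbT /=.
rewrite disjoints_subset subUset -!disjoints_subset dFG andbT.
by rewrite disjoints_subset (subset_trans sA) // setCS subsetUr.
Qed.

Lemma disjoints0 (A : {set T}) : [disjoint A & set0].
Proof. by rewrite disjoints_subset setC0 subsetT. Qed.

Lemma card_sized_sets_mem (w : nat) (a : T) :
  #|[set Z : {set T} | (#|Z| == w) && (a \in Z)]| =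
  if 0 < w then 'C(#|T|.-1, w.-1) else 0.
Proof.
have := card_sized_sets_between w (disjoints0 [set a]).
rewrite setU0 cards1 cardsC1 subn1 => <-; apply: eq_card => Z.
by rewrite !inE sub1set disjoints0 andbT andbC.
Qed.

Lemma card_sized_sets_nmem (w : nat) (a : T) :
  #|[set Z : {set T} | (#|Z| == w) && (a \notin Z)]| = 'C(#|T|.-1, w).
Proof.
have d0a : [disjoint set0 & [set a]] by rewrite disjoint_sym disjoints0.
have := card_sized_sets_between w d0a.
rewrite set0U cards0 cardsC1 subn0 /= => <-; apply: eq_card => Z.
by rewrite !inE sub0set -disjoints1 disjoint_sym andbC.
Qed.

Lemma card_sized_sets_mem2 (w : nat) (a b : T) : a != b ->
  #|[set Z : {set T} | (#|Z| == w) && (a \in Z) && (b \in Z)]| =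
  if 1 < w then 'C(#|T|.-2, w.-2) else 0.
Proof.
move=> ab; have := card_sized_sets_between w (disjoints0 [set a; b]).
rewrite setU0 [#|~: _|]cardsCs setCK cards2 ab /= !subn2 => <-; apply: eq_card => Z.
rewrite !inE subUset !sub1set disjoints0 andbT.
by case: (_ == w); case: (a \in Z); case: (b \in Z).
Qed.

Lemma card_sized_sets_nmem_mem (w : nat) (a b : T) : a != b ->
  #|[set Z : {set T} | (#|Z| == w) && (a \notin Z) && (b \in Z)]| =
  if 0 < w then 'C(#|T|.-2, w.-1) else 0.
Proof.
move=> ab; have dba : [disjoint [set b] & [set a]] by rewrite disjoints1 inE eq_sym.
have := card_sized_sets_between w dba.
rewrite cards1 subn1 [#|~: _|]cardsCs setCK cards2 eq_sym ab /= !subn2 => <-.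
apply: eq_card => Z.
rewrite !inE sub1set -disjoints1 disjoint_sym.
by case: (_ == w); case: [disjoint Z & _]; case: (b \in Z).
Qed.
End SizedSubsets.

(* Imported only now: classical_sets shadows the finset lemmas used above. *)
From mathcomp Require Import all_classical all_reals all_analysis.
From mathcomp Require Import lra ring.
Local Open Scope ring_scope.

Lemma sumr_nat_bool (R : pzSemiRingType) (T : finType) (b : pred T) :
  \sum_(t : T) (b t)%:R = #|[set t | b t]|%:R :> R.
Proof.
by rewrite -sum1dep_card natr_sum [RHS]big_mkcond; apply: eq_bigr => t _; case: (b t).
Qed.

Lemma bin_natr_neq0 (R : numDomainType) (N j : nat) : (j <= N)%N -> 'C(N, j)%:R != 0 :> R.
Proof. by rewrite pnatr_eq0 -lt0n bin_gt0. Qed.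

Lemma bin_pred_ratio (R : numFieldType) (N j : nat) : (j <= N)%N ->
  (if (0 < j)%N then 'C(N.-1, j.-1) else 0%N)%:R / 'C(N, j)%:R = j%:R / N%:R :> R.
Proof.
case: j => [|j] jN /=; first by rewrite !mul0r.
have N_gt0 : (0 < N)%N by exact: leq_ltn_trans jN.
apply/eqP; rewrite eqr_div ?bin_natr_neq0 ?pnatr_eq0 -?lt0n //.
by rewrite -!natrM mulnC mul_bin_diag.
Qed.

Lemma memr_ord (m : nat) (Z : {set 'I_m}) (r : 'I_m) : memr Z r = (r \in Z).
Proof.
apply/existsP/idP => [[a /andP[aZ /eqP /val_inj <-]] // | rZ].
by exists r; rewrite rZ eqxx.
Qed.

Lemma omega_lt (R : realType) (eps : R) (m : nat) :
  0 < eps -> (0 < m)%N -> (omega_of eps m < m)%N.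
Proof.
move=> eps_gt0 m_gt0; rewrite /omega_of.
have e_gt1 : 1 < expR eps by rewrite expR_gt1.
have m_ge1 : 1 <= m%:R :> R by rewrite ler1n.
have x_ge0 : 0 <= m%:R / (expR eps + 1) + 2^-1 :> R.
  by rewrite addr_ge0 // divr_ge0 // ?ler0n // ltW // (lt_trans ltr01) ?ltrDr.
have x_lt : m%:R / (expR eps + 1) < m%:R / 2 :> R.
  by rewrite ltr_pM2l ?ltr0n // ltf_pV2 ?posrE ?ltr0n //; lra.
have : Num.floor (m%:R / (expR eps + 1) + 2^-1 : R) < m%:Z.
  by rewrite floor_lt_int pmulrn; lra.
by rewrite -[Num.floor _]gez0_abs ?floor_ge0 // ltz_nat.
Qed.

Section Randomizer.
Variables (R : realType) (eps : R) (m : nat).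
Hypotheses (eps_gt0 : 0 < eps) (m_ge2 : (2 <= m)%N).
Local Notation w := (omega_of eps m).
Local Notation p := (p_of eps m).
Local Notation q := (q_of eps m).

Let w_lt_m : (w < m)%N.
Proof. by rewrite omega_lt // ltnW. Qed.

Let m1_neq0 : m%:R - 1 != 0 :> R.
Proof. by rewrite subr_eq0 pnatr_eq1 gtn_eqF. Qed.

Lemma p_mul_card_mem :
  p / 'C(m.-1, w.-1)%:R * (if (0 < w)%N then 'C(m.-1, w.-1) else 0%N)%:R = p.
Proof.
rewrite /p_of; case: w w_lt_m => [|w'] w'_lt /=; first by rewrite !mul0r.
by rewrite mulfVK // bin_natr_neq0 // -ltnS prednK // ltnW.
Qed.

(* A wrong residue is reported with probability (w - 1) / (m - 1) in the first
   branch of the mechanism and w / (m - 1) in the second. *)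
Lemma q_ofE : q = (p * (w%:R - 1) + (1 - p) * w%:R) / (m%:R - 1).
Proof.
have w_lt : w%:R < m%:R :> R by rewrite ltr_nat.
have wE_ge0 : 0 <= w%:R * expR eps :> R by rewrite mulr_ge0 ?ler0n ?expR_ge0.
rewrite /q_of /p_of /=; field.
by rewrite m1_neq0; apply/eqP; lra.
Qed.

Lemma sum_mech_pred (r : 'I_m) (g : pred {set 'I_m}) :
  \sum_(Z : {set 'I_m}) mech eps r Z * (g Z)%:R =
  p / 'C(m.-1, w.-1)%:R * #|[set Z : {set 'I_m} | (#|Z| == w) && (r \in Z) && g Z]|%:R +
  (1 - p) / 'C(m.-1, w)%:R * #|[set Z : {set 'I_m} | (#|Z| == w) && (r \notin Z) && g Z]|%:R.
Proof.
rewrite -!sumr_nat_bool !mulr_sumr -big_split; apply: eq_bigr => Z _ /=.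
rewrite /mech memr_ord.
by case: (_ == w); case: (r \in Z); case: (g Z); rewrite /= ?mulr1 ?mulr0 ?addr0 ?add0r.
Qed.

Lemma sum_mech (r : 'I_m) : \sum_(Z : {set 'I_m}) mech eps r Z = 1.
Proof.
have card_predT b : #|[set Z : {set 'I_m} | b Z && xpredT Z]| = #|[set Z | b Z]|.
  by apply: eq_card => Z; rewrite !inE andbT.
under eq_bigr do rewrite -[mech _ _ _]mulr1.
rewrite (sum_mech_pred r xpredT) !card_predT card_sized_sets_mem card_sized_sets_nmem.
by rewrite card_ord p_mul_card_mem mulfVK ?subrKC // bin_natr_neq0 // -ltnS prednK // ltnW.
Qed.

Lemma sum_mech_mem_other (r a : 'I_m) : r != a ->
  \sum_(Z : {set 'I_m}) mech eps r Z * (a \in Z)%:R = q.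
Proof.
move=> ra; rewrite (sum_mech_pred r (fun Z => a \in Z)) /=.
rewrite card_sized_sets_mem2 // card_sized_sets_nmem_mem // card_ord q_ofE.
have p0 : w = 0%N -> p = 0 by rewrite /p_of => ->; rewrite !mul0r.
have m1E : m.-1%:R = m%:R - 1 :> R by rewrite -subn1 natrB // ltnW.
move: (p) p0 w_lt_m; case: w => [|j] P P0 j_lt.
  by rewrite P0 //= !(mul0r, mulr0, add0r, addr0).
have j_le : (j.+1 <= m.-1)%N by rewrite -ltnS prednK // ltnW.
have := bin_pred_ratio R j_le; have := bin_pred_ratio R (ltnW j_le); rewrite /= m1E => r1 r0.
rewrite !(mulrAC _ _^-1) -!mulrA r0 r1 -natr1.
by field.
Qed.

Lemma sum_mech_mem_self (r : 'I_m) :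
  \sum_(Z : {set 'I_m}) mech eps r Z * (r \in Z)%:R = p.
Proof.
rewrite (sum_mech_pred r (fun Z => r \in Z)) /=.
have -> : #|[set Z : {set 'I_m} | (#|Z| == w) && (r \notin Z) && (r \in Z)]| = 0%N.
  by apply: eq_card0 => Z; rewrite !inE; case: (r \in Z); rewrite ?andbF.
have -> : #|[set Z : {set 'I_m} | (#|Z| == w) && (r \in Z) && (r \in Z)]| =
          #|[set Z : {set 'I_m} | (#|Z| == w) && (r \in Z)]|.
  by apply: eq_card => Z; rewrite !inE -andbA andbb.
by rewrite card_sized_sets_mem card_ord p_mul_card_mem mulr0 addr0.
Qed.

Lemma sum_mech_mem (r a : 'I_m) :
  \sum_(Z : {set 'I_m}) mech eps r Z * (a \in Z)%:R = q + (p - q) * (r == a)%:R.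
Proof.
have [<-|ra] := eqVneq r a; first by rewrite sum_mech_mem_self mulr1 addrC subrK.
by rewrite sum_mech_mem_other // mulr0 addr0.
Qed.
End Randomizer.

Section Assignments.
Variables (l n : nat) (nn : 'I_l -> nat).

Definition has_counts (t : {ffun 'I_n -> 'I_l}) : bool :=
  [forall j, #|[set i | t i == j]| == nn j].

Lemma has_counts_perm (s : {perm 'I_n}) (t : {ffun 'I_n -> 'I_l}) :
  has_counts [ffun i => t (s i)] = has_counts t.
Proof.
apply: eq_forallb => j.
have -> : [set i | [ffun i => t (s i)] i == j] = s @^-1: [set i | t i == j].
  by apply/setP => i; rewrite !inE ffunE.
by rewrite card_preimset //; apply: perm_inj.
Qed.

(* Exchanging users i and i' permutes the labellings with the prescribed counts. *)
Lemma card_has_counts_at_eq (i i' : 'I_n) (j : 'I_l) :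
  #|[set t | has_counts t && (t i == j)]| = #|[set t | has_counts t && (t i' == j)]|.
Proof.
pose f (t : {ffun 'I_n -> 'I_l}) := [ffun u => t (tperm i i' u)].
have f_inj : injective f.
  by apply: (can_inj (g := f)) => t; apply/ffunP => u; rewrite !ffunE tpermK.
rewrite -[RHS](card_preimset _ f_inj); apply: eq_card => t.
by rewrite !inE has_counts_perm ffunE tpermR.
Qed.

Lemma card_has_counts_at (i : 'I_n) (j : 'I_l) :
  (n * #|[set t | has_counts t && (t i == j)]| = #|[set t | has_counts t]| * nn j)%N.
Proof.
transitivity (\sum_(i' < n) #|[set t | has_counts t && (t i == j)]|)%N.
  by rewrite sum_nat_const card_ord.
under eq_bigr => i' _ do rewrite (card_has_counts_at_eq i i') -sum1dep_card.
rewrite (exchange_big_dep (has_counts)) /= => [|_ t _ /andP[] //].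
rewrite -sum1dep_card big_distrl /=; apply: eq_bigr => t ht.
by rewrite mul1n -(eqP (forallP ht j)) -sum1dep_card; apply: eq_bigl => i'; rewrite ht.
Qed.

Lemma has_counts_exists (j0 : 'I_l) : (\sum_(j < l) nn j)%N = n ->
  exists t : {ffun 'I_n -> 'I_l}, has_counts t.
Proof.
move=> sum_nn; pose s := flatten [seq nseq (nn j) j | j <- enum 'I_l].
have count_s j : count_mem j s = nn j.
  rewrite count_flatten -map_comp sumnE big_map big_enum (bigD1 j) //= count_nseq /= eqxx.
  by rewrite mul1n big1 ?addn0 // => j' /negPf; rewrite count_nseq /= => ->.
have size_s : size s = n.
  rewrite size_flatten /shape -map_comp sumnE big_map big_enum -sum_nn.
  by apply: eq_bigr => j _; rewrite /= size_nseq.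
exists [ffun i : 'I_n => nth j0 s i]; apply/forallP => j; apply/eqP.
rewrite -count_s -sum1dep_card.
transitivity (\sum_(0 <= i < n | nth j0 s i == j) 1)%N.
  by rewrite big_mkord; apply: eq_bigl => i; rewrite ffunE.
by rewrite sum1_count -size_s -[in RHS](mkseq_nth j0 s) count_map /index_iota subn0.
Qed.
End Assignments.

Section Reports.
Variables (R : pzSemiRingType) (l n : nat) (m : 'I_l -> nat).

Lemma sum_report_tag (t : 'I_l) (F : forall j, {set 'I_(m j)} -> R) :
  \sum_(r : report m | tag r == t) F (tag r) (tagged r) = \sum_(Z : {set 'I_(m t)}) F t Z.
Proof.
rewrite (eq_bigl (fun r : report m => (tag r == t) && true)) => [|r]; last by rewrite andbT.
by rewrite -(@sig_big_dep _ _ _ _ _ (fun j => j == t) (fun _ _ => true)) big_pred1_eq.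
Qed.

Lemma counts_eq_tags (nn : 'I_l -> nat) (o : {ffun 'I_n -> report m}) :
  counts_eq nn o = has_counts nn [ffun i => tag (o i)].
Proof.
apply: eq_forallb => j; congr (_ == _).
by apply: eq_card => i; rewrite !inE ffunE.
Qed.

Lemma counts_eq_cnt (nn : 'I_l -> nat) (o : {ffun 'I_n -> report m}) :
  counts_eq nn o -> cnt o = nn.
Proof. by move/forallP => o_nn; apply: funext => j; apply/eqP. Qed.

Lemma sum_counts_eq_prod (nn : 'I_l -> nat) (H : 'I_n -> report m -> R) :
  \sum_(o : {ffun 'I_n -> report m} | counts_eq nn o) \prod_(i < n) H i (o i) =
  \sum_(t | has_counts nn t) \prod_(i < n) \sum_(r | tag r == t i) H i r.
Proof.
rewrite (partition_big (fun o : {ffun 'I_n -> report m} => [ffun i => tag (o i)])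
                       (has_counts nn)) => [|o]; last by rewrite counts_eq_tags.
apply: eq_bigr => t ht; rewrite bigA_distr_big_dep; apply: eq_bigl => o.
rewrite counts_eq_tags; apply/andP/familyP => [[_ /eqP <-] i | o_t].
  by rewrite unfold_in /= ffunE.
have -> : [ffun i => tag (o i)] = t by apply/ffunP => u; rewrite ffunE; apply/eqP/o_t.
by rewrite ht eqxx.
Qed.
End Reports.

Section ConditionalMoments.
Variables (R : realType) (eps : R) (l n : nat) (m : 'I_l -> nat).
Variables (xx : 'I_n -> nat) (nn : 'I_l -> nat).
Hypotheses (eps_gt0 : 0 < eps) (m_ge2 : forall j, (2 <= m j)%N).

Local Notation outcome := {ffun 'I_n -> report m}.
Local Notation assignment := {ffun 'I_n -> 'I_l}.

Let user (i : 'I_n) (r : report m) : R :=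
  l%:R^-1 * mech eps (xx i %% m (tag r)) (tagged r).

Let residue (i : 'I_n) (j : 'I_l) : 'I_(m j) :=
  Ordinal (ltn_pmod (xx i) (ltnW (m_ge2 j))).

Lemma sum_user_tag (i : 'I_n) (t : 'I_l) : \sum_(r | tag r == t) user i r = l%:R^-1.
Proof.
rewrite (sum_report_tag t (fun j Z => l%:R^-1 * mech eps (residue i j) Z)) -mulr_sumr.
by rewrite sum_mech ?mulr1.
Qed.

Lemma sum_user_tag_mem (i : 'I_n) (t j : 'I_l) (a : 'I_(m j)) :
  \sum_(r | tag r == t) user i r * ((tag r == j) && memr (tagged r) a)%:R =
  l%:R^-1 * ((t == j)%:R *
    (q_of eps (m j) + (p_of eps (m j) - q_of eps (m j)) * ((xx i %% m j)%N == a)%:R)).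
Proof.
rewrite (sum_report_tag t (fun j' Z =>
  l%:R^-1 * mech eps (residue i j') Z * ((j' == j) && memr Z a)%:R)).
have [->|tj] := eqVneq t j; last first.
  by rewrite mul0r mulr0 big1 // => Z _; rewrite mulr0.
under eq_bigr do rewrite andTb memr_ord -mulrA.
by rewrite -mulr_sumr sum_mech_mem ?mul1r.
Qed.

Lemma sum_prob_counts_eq :
  \sum_(o : outcome | counts_eq nn o) prob eps xx o =
  #|[set t : assignment | has_counts nn t]|%:R * l%:R^-1 ^+ n.
Proof.
rewrite (sum_counts_eq_prod nn user) -sum1dep_card natr_sum mulr_suml.
apply: eq_bigr => t _; under eq_bigr do rewrite sum_user_tag.
by rewrite prodr_const card_ord mulr1n mul1r.
Qed.

Lemma sum_prob_counts_eq_neq0 (j0 : 'I_l) : (\sum_(j < l) nn j)%N = n ->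
  \sum_(o : outcome | counts_eq nn o) prob eps xx o != 0.
Proof.
move=> sum_nn; have [t t_nn] := has_counts_exists j0 sum_nn.
rewrite sum_prob_counts_eq mulf_neq0 ?expf_neq0 ?invr_eq0 ?pnatr_eq0 -?lt0n //.
  by apply/card_gt0P; exists t; rewrite inE.
exact: leq_ltn_trans (leq0n _) (ltn_ord j0).
Qed.

Lemma sum_prob_mem_at (i0 : 'I_n) (j : 'I_l) (a : 'I_(m j)) :
  \sum_(o : outcome | counts_eq nn o)
     prob eps xx o * ((tag (o i0) == j) && memr (tagged (o i0)) a)%:R =
  #|[set t : assignment | has_counts nn t && (t i0 == j)]|%:R * l%:R^-1 ^+ n *
  (q_of eps (m j) + (p_of eps (m j) - q_of eps (m j)) * ((xx i0 %% m j)%N == a)%:R).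
Proof.
set K := q_of _ _ + _.
pose H i (r : report m) :=
  user i r * (if i == i0 then ((tag r == j) && memr (tagged r) a)%:R else 1).
have sum_H i t : \sum_(r | tag r == t) H i r =
    l%:R^-1 * (if i == i0 then (t == j)%:R * K else 1).
  rewrite /H; have [->|_] := eqVneq i i0; first exact: sum_user_tag_mem.
  by under eq_bigr do rewrite mulr1; rewrite sum_user_tag mulr1.
rewrite (eq_bigr (fun o : outcome => \prod_i H i (o i))) => [|o _]; last first.
  by rewrite big_split /= -big_mkcond big_pred1_eq.
rewrite (sum_counts_eq_prod nn H) -sum1dep_card natr_sum !mulr_suml big_mkcondr /=.
apply: eq_bigr => t _; under eq_bigr do rewrite sum_H.
rewrite big_split /= prodr_const card_ord -big_mkcond big_pred1_eq.
by case: (t i0 == j); rewrite ?mulr1n ?mul1r ?mul0r ?mulr0.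
Qed.

Lemma sum_prob_cnt_a (j : 'I_l) (a : 'I_(m j)) : (0 < n)%N ->
  \sum_(o : outcome | counts_eq nn o) prob eps xx o * (cnt_a o j a)%:R =
  (\sum_(o : outcome | counts_eq nn o) prob eps xx o) * (nn j)%:R *
  (q_of eps (m j) + (p_of eps (m j) - q_of eps (m j)) *
     (#|[set i | (xx i %% m j)%N == a]|%:R / n%:R)).
Proof.
move=> n_gt0; have n_neq0 : n%:R != 0 :> R by rewrite pnatr_eq0 -lt0n.
have card_at i : #|[set t : assignment | has_counts nn t && (t i == j)]|%:R =
    #|[set t : assignment | has_counts nn t]|%:R * (nn j)%:R / n%:R :> R.
  by apply: (mulfI n_neq0); rewrite mulrCA mulfV // mulr1 -!natrM card_has_counts_at.
under eq_bigr do rewrite /cnt_a -sumr_nat_bool mulr_sumr.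
rewrite exchange_big /=; under eq_bigr do rewrite sum_prob_mem_at card_at.
rewrite sum_prob_counts_eq -mulr_sumr big_split /= sumr_const card_ord.
rewrite -mulr_sumr sumr_nat_bool -mulr_natr.
by field.
Qed.

Lemma sum_prob_shat (j : 'I_l) :
  p_of eps (m j) != q_of eps (m j) -> (0 < nn j)%N -> (0 < n)%N ->
  \sum_(o : outcome | counts_eq nn o) prob eps xx o *: shat eps o j =
  (\sum_(o : outcome | counts_eq nn o) prob eps xx o) *:
    \col_(a < m j) (#|[set i | (xx i %% m j)%N == a]|%:R / n%:R).
Proof.
move=> pq nn_gt0 n_gt0; apply/matrixP => a c; rewrite summxE !mxE.
set p := p_of eps (m j); set q := q_of eps (m j).
have n_neq0 : n%:R != 0 :> R by rewrite pnatr_eq0 -lt0n.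
have nn_neq0 : (nn j)%:R != 0 :> R by rewrite pnatr_eq0 -lt0n.
have pq_neq0 : p - q != 0 by rewrite subr_eq0.
transitivity ((\sum_(o : outcome | counts_eq nn o) prob eps xx o * (cnt_a o j a)%:R)
                / ((nn j)%:R * (p - q)) -
              (\sum_(o : outcome | counts_eq nn o) prob eps xx o) * (q / (p - q))).
  rewrite !mulr_suml -sumrB; apply: eq_bigr => o /counts_eq_cnt o_nn.
  rewrite !mxE -/p -/q (_ : cnt o j = nn j) ?o_nn //.
  by field; rewrite nn_neq0 pq_neq0.
rewrite sum_prob_cnt_a // -/p -/q.
by field; rewrite n_neq0 pq_neq0 nn_neq0.
Qed.
End ConditionalMoments.

Lemma trmx_mul_self_eq0 (R : realFieldType) (r p : nat) (B : 'M[R]_(r, p)) :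
  B *m B^T = 0 -> B = 0.
Proof.
move=> BBt0; apply/matrixP => i s; rewrite mxE; apply/eqP; rewrite -sqrf_eq0; apply/eqP.
have sq_ge0 t : xpredT t -> 0 <= B i t ^+ 2 by rewrite sqr_ge0.
move/matrixP: BBt0 => /(_ i i); rewrite !mxE => BBii.
apply: (psumr_eq0P sq_ge0) => //; rewrite -[RHS]BBii.
by apply: eq_bigr => t _; rewrite mxE expr2.
Qed.

Lemma gram_unitmx (R : realFieldType) (p k : nat) (A : 'M[R]_(p, k)) :
  \rank A = k -> A^T *m A \in unitmx.
Proof.
move=> rkA; rewrite -row_free_unit -kermx_eq0; set V := kermx _.
have VAt0 : V *m A^T = 0.
  apply: trmx_mul_self_eq0.
  by rewrite trmx_mul trmxK mulmxA -(mulmxA V) mulmx_ker mul0mx.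
by rewrite -(mulmx_free_eq0 _ (_ : row_free A^T)) ?VAt0 // /row_free mxrank_tr rkA.
Qed.

Lemma least_squares_exact (R : realFieldType) (p k : nat) (A : 'M[R]_(p, k)) (f : 'cV_k) :
  \rank A = k -> invmx (A^T *m A) *m A^T *m (A *m f) = f.
Proof. by move=> rkA; rewrite mulmxA -(mulmxA (invmx _)) mulVmx ?mul1mx ?gram_unitmx. Qed.

Lemma scale_mxcol (R : pzRingType) (l n : nat) (p_ : 'I_l -> nat) (c : R)
    (B_ : forall j, 'M[R]_(p_ j, n)) :
  c *: \mxcol_j B_ j = \mxcol_j (c *: B_ j).
Proof. by apply/matrixP => i j; rewrite !mxE. Qed.

Lemma Ablock_mul_fvec (R : realType) (n k mj : nat) (x : 'I_n -> 'I_k) :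
  Ablock R mj k *m fvec R x = \col_(a < mj) (#|[set i | (x i %% mj)%N == a]|%:R / n%:R).
Proof.
apply/matrixP => a c; rewrite !mxE; under eq_bigr do rewrite !mxE mulrA.
rewrite -mulr_suml -sumr_nat_bool; congr (_ / _).
under eq_bigr do rewrite -sumr_nat_bool mulr_sumr.
rewrite exchange_big; apply: eq_bigr => i _ /=.
rewrite (bigD1 (x i)) //= eqxx mulr1 big1 ?addr0 // => v xi_v.
by rewrite eq_sym in xi_v; rewrite (negPf xi_v) mulr0.
Qed.

Lemma Wsqrt_mul_mxcol (R : realType) (eps : R) (l n : nat) (m nn : 'I_l -> nat)
    (B_ : forall j, 'M[R]_(m j, n)) :
  Wsqrt eps m nn *m \mxcol_j B_ j = \mxcol_j (Num.sqrt (weight eps (m j) (nn j)) *: B_ j).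
Proof. by rewrite mul_mxdiag_mxcol; apply: eq_mxcol => j; rewrite mul_scalar_mx. Qed.

Lemma Wsqrt_mul_sum_prob_svec (R : realType) (eps : R) (l n k : nat) (m : 'I_l -> nat)
    (x : 'I_n -> 'I_k) (nn : 'I_l -> nat) :
  0 < eps -> (forall j, (2 <= m j)%N) -> (forall j, (0 < nn j)%N) -> (0 < n)%N ->
  let P o := prob eps (fun i => nat_of_ord (x i)) o in
  Wsqrt eps m nn *m
    (\sum_(o : {ffun 'I_n -> report m} | counts_eq nn o) P o *: svec eps o) =
  (\sum_(o : {ffun 'I_n -> report m} | counts_eq nn o) P o) *:
    (Aw eps k m nn *m fvec R x).
Proof.
move=> eps_gt0 m_ge2 nn_gt0 n_gt0 P.
have -> : \sum_(o | counts_eq nn o) P o *: svec eps o =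
          \mxcol_j (\sum_(o | counts_eq nn o) P o *: shat eps o j).
  by apply/matrixP => a b; rewrite summxE mxE summxE; apply: eq_bigr => o _; rewrite !mxE.
rewrite /Aw /Amat -mulmxA mxcol_mul !Wsqrt_mul_mxcol scale_mxcol; apply: eq_mxcol => j.
(* A block of weight 0, e.g. one with p = q where shat divides by 0, drops out. *)
set sw := Num.sqrt _; have [-> | sw_neq0] := eqVneq sw 0; first by rewrite !scale0r scaler0.
have pq : p_of eps (m j) != q_of eps (m j).
  by apply: contra_neq sw_neq0 => pq; rewrite /sw /weight pq subrr expr0n /= !mul0r sqrtr0.
by rewrite sum_prob_shat // Ablock_mul_fvec scalerA mulrC -scalerA.
Qed.

Theorem theorem2 (R : realType) (eps : R) (l n k : nat) (m : 'I_l -> nat)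
  (x : 'I_n -> 'I_k) (nn : 'I_l -> nat) :
  0 < eps ->
  (forall j, (2 <= m j)%N) ->
  (forall j j', j != j' -> coprime (m j) (m j')) ->
  (forall j, (1 <= nn j)%N) ->
  (\sum_(j < l) nn j)%N = n ->
  \rank (Aw eps k m nn) = k ->
  cond_exp_fhat eps m x nn = fvec R x.
Proof.
(* Coprimality of the moduli only serves to make A_w of full rank, which is assumed. *)
move=> eps_gt0 m_ge2 _ nn_gt0 sum_nn rank_Aw.
have [k0 | k_gt0] := posnP k; first by subst k; apply/matrixP => -[].
have l_gt0 : (0 < l)%N.
  rewrite lt0n; apply: contraTneq k_gt0 => l0.
  rewrite -rank_Aw -leqNgt (leq_trans (rank_leq_row _)) // big1 // => j _.
  by have := ltn_ord j; rewrite {2}l0.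
have n_gt0 : (0 < n)%N by rewrite -sum_nn (bigD1 (Ordinal l_gt0)) //= ltn_addr.
rewrite /cond_exp_fhat; set P := prob eps (fun i => nat_of_ord (x i)).
set Zs := \sum_(o | _) P o.
have Zs_neq0 : Zs != 0 := sum_prob_counts_eq_neq0 _ eps_gt0 m_ge2 (Ordinal l_gt0) sum_nn.
have mean_fhat : \sum_(o | counts_eq nn o) P o *: fhat eps k o =
    invmx ((Aw eps k m nn)^T *m Aw eps k m nn) *m (Aw eps k m nn)^T *m
      (Wsqrt eps m nn *m \sum_(o | counts_eq nn o) P o *: svec eps o).
  rewrite !mulmx_sumr; apply: eq_bigr => o /counts_eq_cnt o_nn.
  by rewrite /fhat o_nn /= !scalemxAr.
rewrite mean_fhat Wsqrt_mul_sum_prob_svec // -/Zs -!scalemxAr scalerA mulVf // scale1r.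
exact: least_squares_exact.
Qed.
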